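(* Let $\mathcal{C}$ be a cocomplete category and $J$ a set of morphisms of $\mathcal{C}$. If the n.w.f.s. $(\mathsf L,\mathsf R,\Delta)$ generated by $J$ exists, then it is the free n.w.f.s. on $J$: there are bijections, natural in the n.w.f.s. $(\mathsf L',\mathsf R',\Delta')$, between morphisms of n.w.f.s.'s $(\mathsf L,\mathsf R,\Delta)\to(\mathsf L',\mathsf R',\Delta')$ and functors $J\to\mathsf L'\text{-}\mathbf{Map}$ over $\mathcal{C}^{\mathbf 2}$ (i.e. choices of an $\mathsf L'$-coalgebra structure on each $f\in J$).
   Context: $\mathcal{C}^{\mathbf 2}$ is the arrow category. Functorial factorisation $(E,\lambda,\rho)$: $E\colon\mathcal{C}^{\mathbf 2}\to\mathcal{C}$, $\lambda\colon\mathrm{dom}\Rightarrow E$, $\rho\colon E\Rightarrow\mathrm{cod}$, $\rho_f\lambda_f=f$. An n.w.f.s. is such with natural maps $\sigma_f\colon Ef\to E(\lambda_f)$, $\pi_f\colon E(\rho_f)\to Ef$ satisfying $\sigma_f\lambda_f=\lambda_{\lambda_f}$, $\rho_f\pi_f=\rho_{\rho_f}$, $\rho_{\lambda_f}\sigma_f=1$, $\pi_f\lambda_{\rho_f}=1$, $E(1_X,\rho_f)\sigma_f=1$, $\pi_fE(\lambda_f,1_Y)=1$, $E(1_X,\sigma_f)\sigma_f=\sigma_{\lambda_f}\sigma_f$, $\pi_fE(\pi_f,1_Y)=\pi_f\pi_{\rho_f}$, $\sigma_f\pi_f=\pi_{\lambda_f}E(\sigma_f,\pi_f)\sigma_{\rho_f}$.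 Forgetting $\pi$ gives a comonad over $\mathrm{dom}$ $\mathsf L=(E,\lambda,\rho,\sigma)$. A morphism of n.w.f.s.'s is a natural $\alpha\colon E\Rightarrow E'$ with $\alpha\lambda=\lambda'$, $\rho'\alpha=\rho$, $\sigma'_f\alpha_f=\alpha_{\lambda'_f}E(1_X,\alpha_f)\sigma_f$ and $\pi'_f\alpha_{\rho'_f}E(\alpha_f,1_Y)=\alpha_f\pi_f$. An $\mathsf L'$-coalgebra is $(f,s)$, $s\colon Y\to E'f$, $sf=\lambda'_f$, $\rho'_fs=1$, $\sigma'_fs=E'(1_X,s)s$; naturality uses $(f,s)\mapsto(f,\alpha_fs)$. $\mathbf{Comon}$ denotes the category of comonads over $\mathrm{dom}$ (data $(E,\lambda,\rho,\sigma)$ with the $\sigma$-axioms above; morphisms: $\alpha$ with the $\lambda,\rho,\sigma$ conditions). The one-step comonad $\mathsf L^1\in\mathbf{Comon}$: for $g\colon C\to D$, $S_g$ is the set of $x=(f_x,(h_x,k_x))$, $f_x\colon A_x\to B_x$ in $J$, $(h_x,k_x)\colon f_x\to g$ a square; $E^1g$ is the pushout of $\sum f_x$ along $\langle h_x\rangle$, $\lambda^1_g$ the pushout injection, $\rho^1_g$ induced by $g,\langle k_x\rangle$; $E^1(h,k)$ induced by $h$ and reindexing $x\mapsto(h,k)\circ x$; $\sigma^1_g$ induced by $1_C$ and sending summand $x$ to summand $(f_x,(h_x,\iota_x))$ of $S_{\lambda^1_g}$, where $\iota_x\colon B_x\to E^1g$ is the injection followed by the pushout map. The n.w.f.s. generated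 by $J$ is an n.w.f.s. $(\mathsf L,\mathsf R,\Delta)$ together with a morphism $\chi\colon\mathsf L^1\to\mathsf L$ in $\mathbf{Comon}$ such that for every n.w.f.s. $V$, precomposition with $\chi$ is a bijection from n.w.f.s. morphisms $(\mathsf L,\mathsf R,\Delta)\to V$ to $\mathbf{Comon}$-morphisms $\mathsf L^1\to V$ (the free $\otimes$-monoid in $\mathbf{Comon}$ on $\mathsf L^1$). *)

From Stdlib Require Import FunctionalExtensionality ProofIrrelevance.

(** * Categories (hom-types with Leibniz equality) *)
Record Category := {
  Obj :> Type;
  Hom : Obj -> Obj -> Type;
  idc : forall A, Hom A A;
  comp : forall A B D, Hom B D -> Hom A B -> Hom A D;
  comp_id_l : forall A B (f : Hom A B), comp A B B (idc B) f = f;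
  comp_id_r : forall A B (f : Hom A B), comp A A B f (idc A) = f;
  comp_assoc : forall A B D X (h : Hom D X) (g : Hom B D) (f : Hom A B),
      comp A D X h (comp A B D g f) = comp A B X (comp B D X h g) f }.

Arguments Hom {c} _ _.
Arguments idc {c} A.
Arguments comp {c A B D} _ _.
Arguments comp_id_l {c A B} f.
Arguments comp_id_r {c A B} f.
Arguments comp_assoc {c A B D X} h g f.
Infix "⊚" := comp (at level 40, left associativity).

(** * Cocompleteness: chosen small coproducts and chosen pushouts.
    (A category is cocomplete iff it has all small coproducts and all
    pushouts.)  The mediating map of a pushout is presented as a total
    operation [po_desc] whose characteristic property holds on cocones. *)
Record Cocomplete (C : Category) := {
  copr : forall (I : Type) (F : I -> Obj C), Obj C;
  copr_in : forall (I : Type) (F : I -> Obj C) (i : I), Hom (F i) (copr I F);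
  copr_desc : forall (I : Type) (F : I -> Obj C) (X : Obj C),
      (forall i, Hom (F i) X) -> Hom (copr I F) X;
  copr_beta : forall I F X (h : forall i, Hom (F i) X) i,
      copr_desc I F X h ⊚ copr_in I F i = h i;
  copr_eta : forall I F X (h : forall i, Hom (F i) X) (u : Hom (copr I F) X),
      (forall i, u ⊚ copr_in I F i = h i) -> u = copr_desc I F X h;
  po : forall (A B D : Obj C), Hom A B -> Hom A D -> Obj C;
  po_l : forall A B D (f : Hom A B) (g : Hom A D), Hom B (po A B D f g);
  po_r : forall A B D (f : Hom A B) (g : Hom A D), Hom D (po A B D f g);
  po_comm : forall A B D (f : Hom A B) (g : Hom A D),
      po_l A B D f g ⊚ f = po_r A B D f g ⊚ g;
  po_desc : forall A B D (f : Hom A B) (g : Hom A D) (X : Obj C),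
      Hom B X -> Hom D X -> Hom (po A B D f g) X;
  po_beta : forall A B D (f : Hom A B) (g : Hom A D) X (u : Hom B X) (v : Hom D X),
      u ⊚ f = v ⊚ g ->
      po_desc A B D f g X u v ⊚ po_l A B D f g = u /\
      po_desc A B D f g X u v ⊚ po_r A B D f g = v;
  po_eta : forall A B D (f : Hom A B) (g : Hom A D) X (u : Hom B X) (v : Hom D X)
      (w : Hom (po A B D f g) X),
      u ⊚ f = v ⊚ g -> w ⊚ po_l A B D f g = u -> w ⊚ po_r A B D f g = v ->
      w = po_desc A B D f g X u v }.

Arguments copr {C} c {I} F.
Arguments copr_in {C} c {I} F i.
Arguments copr_desc {C} c {I} F {X} h.
Arguments po {C} c {A B D} f g.
Arguments po_l {C} c {A B D} f g.
Arguments po_r {C} c {A B D} f g.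
Arguments po_comm {C} c {A B D} f g.
Arguments po_desc {C} c {A B D} f g {X} u v.

Record Arr (C : Category) := mkArr { adom : Obj C; acod : Obj C; amap : Hom adom acod }.
Arguments mkArr {C adom acod} amap.
Arguments adom {C} a.
Arguments acod {C} a.
Arguments amap {C} a.

Record Sq {C : Category} (f g : Arr C) := mkSq {
  sq_top : Hom (adom f) (adom g);
  sq_bot : Hom (acod f) (acod g);
  sq_comm : sq_bot ⊚ amap f = amap g ⊚ sq_top }.
Arguments mkSq {C f g} sq_top sq_bot sq_comm.
Arguments sq_top {C f g} s.
Arguments sq_bot {C f g} s.
Arguments sq_comm {C f g} s.

Lemma sq_id_comm {C : Category} (f : Arr C) :
  idc (acod f) ⊚ amap f = amap f ⊚ idc (adom f).
Proof. now rewrite comp_id_l, comp_id_r. Qed.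

Definition sq_id {C : Category} (f : Arr C) : Sq f f :=
  mkSq (idc (adom f)) (idc (acod f)) (sq_id_comm f).

Lemma sq_comp_comm {C : Category} {f g h : Arr C} (s : Sq f g) (t : Sq g h) :
  (sq_bot t ⊚ sq_bot s) ⊚ amap f = amap h ⊚ (sq_top t ⊚ sq_top s).
Proof.
  rewrite <- comp_assoc, (sq_comm s), comp_assoc, (sq_comm t), comp_assoc.
  reflexivity.
Qed.

Definition sq_comp {C : Category} {f g h : Arr C} (s : Sq f g) (t : Sq g h) : Sq f h :=
  mkSq (sq_top t ⊚ sq_top s) (sq_bot t ⊚ sq_bot s) (sq_comp_comm s t).

Lemma id_r_trans {C : Category} {A B : Obj C} (x y : Hom A B) : x = y -> x = y ⊚ idc A.
Proof. intros ->; now rewrite comp_id_r. Qed.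

Lemma id_l_trans {C : Category} {A B : Obj C} (x y : Hom A B) : x = y -> idc B ⊚ y = x.
Proof. intros ->; now rewrite comp_id_l. Qed.

(** * Functorial factorisations with a comultiplication (raw data) *)
Record PreComon (C : Category) := {
  E : Arr C -> Obj C;
  Emap : forall f g : Arr C, Sq f g -> Hom (E f) (E g);
  lam : forall f : Arr C, Hom (adom f) (E f);
  rho : forall f : Arr C, Hom (E f) (acod f);
  sig : forall f : Arr C, Hom (E f) (E (mkArr (lam f))) }.
Arguments E {C} p f.
Arguments Emap {C} p {f g} s.
Arguments lam {C} p f.
Arguments rho {C} p f.
Arguments sig {C} p f.

Definition lamA {C} (K : PreComon C) (f : Arr C) : Arr C := mkArr (lam K f).
Definition rhoA {C} (K : PreComon C) (f : Arr C) : Arr C := mkArr (rho K f).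

Section Squares.
Context {C : Category} (K : PreComon C).

Definition sqLam {f g : Arr C} (s : Sq f g)
  (H : Emap K s ⊚ lam K f = lam K g ⊚ sq_top s) : Sq (lamA K f) (lamA K g) :=
  @mkSq C (lamA K f) (lamA K g) (sq_top s) (Emap K s) H.

Definition sqRho {f g : Arr C} (s : Sq f g)
  (H : rho K g ⊚ Emap K s = sq_bot s ⊚ rho K f) : Sq (rhoA K f) (rhoA K g) :=
  @mkSq C (rhoA K f) (rhoA K g) (Emap K s) (sq_bot s) (eq_sym H).

Definition sqLamF (f : Arr C) (H : rho K f ⊚ lam K f = amap f) : Sq (lamA K f) f :=
  @mkSq C (lamA K f) f (idc (adom f)) (rho K f) (id_r_trans _ _ H).

Definition sqLamLam (f : Arr C) (H : sig K f ⊚ lam K f = lam K (lamA K f)) :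
  Sq (lamA K f) (lamA K (lamA K f)) :=
  @mkSq C (lamA K f) (lamA K (lamA K f)) (idc (adom f)) (sig K f) (id_r_trans _ _ H).

Definition sqFRho (f : Arr C) (H : rho K f ⊚ lam K f = amap f) : Sq f (rhoA K f) :=
  @mkSq C f (rhoA K f) (lam K f) (idc (acod f)) (id_l_trans _ _ H).

Definition sqPi (pi : forall f, Hom (E K (rhoA K f)) (E K f)) (f : Arr C)
  (H : rho K f ⊚ pi f = rho K (rhoA K f)) : Sq (rhoA K (rhoA K f)) (rhoA K f) :=
  @mkSq C (rhoA K (rhoA K f)) (rhoA K f) (pi f) (idc (acod f)) (id_l_trans _ _ H).

Definition sqSigPi (pi : forall f, Hom (E K (rhoA K f)) (E K f)) (f : Arr C)
  (H3 : rho K (lamA K f) ⊚ sig K f = idc (E K f))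
  (H4 : pi f ⊚ lam K (rhoA K f) = idc (E K f)) :
  Sq (lamA K (rhoA K f)) (rhoA K (lamA K f)) :=
  @mkSq C (lamA K (rhoA K f)) (rhoA K (lamA K f)) (sig K f) (pi f) (eq_trans H4 (eq_sym H3)).

Definition sqCoalg (f : Arr C) (s : Hom (acod f) (E K f))
  (H : s ⊚ amap f = lam K f) : Sq f (lamA K f) :=
  @mkSq C f (lamA K f) (idc (adom f)) s (id_r_trans _ _ H).
End Squares.

Definition sqAlphaLam {C} (K K' : PreComon C) (a : forall f, Hom (E K f) (E K' f))
  (f : Arr C) (H : a f ⊚ lam K f = lam K' f) : Sq (lamA K f) (lamA K' f) :=
  @mkSq C (lamA K f) (lamA K' f) (idc (adom f)) (a f) (id_r_trans _ _ H).

Definition sqAlphaRho {C} (K K' : PreComon C) (a : forall f, Hom (E K f) (E K' f))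
  (f : Arr C) (H : rho K' f ⊚ a f = rho K f) : Sq (rhoA K f) (rhoA K' f) :=
  @mkSq C (rhoA K f) (rhoA K' f) (a f) (idc (acod f)) (id_l_trans _ _ H).

(** * Comonads over dom (the category Comon) *)
Record IsComon {C : Category} (K : PreComon C) : Prop := {
  Emap_id : forall f, Emap K (sq_id f) = idc (E K f);
  Emap_comp : forall f g h (s : Sq f g) (t : Sq g h),
      Emap K (sq_comp s t) = Emap K t ⊚ Emap K s;
  lam_nat : forall f g (s : Sq f g), Emap K s ⊚ lam K f = lam K g ⊚ sq_top s;
  rho_nat : forall f g (s : Sq f g), rho K g ⊚ Emap K s = sq_bot s ⊚ rho K f;
  factor : forall f, rho K f ⊚ lam K f = amap f;
  sig_nat : forall f g (s : Sq f g),
      Emap K (sqLam K s (lam_nat f g s)) ⊚ sig K f = sig K g ⊚ Emap K s;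
  cm_ax1 : forall f, sig K f ⊚ lam K f = lam K (lamA K f);
  cm_ax3 : forall f, rho K (lamA K f) ⊚ sig K f = idc (E K f);
  cm_ax5 : forall f, Emap K (sqLamF K f (factor f)) ⊚ sig K f = idc (E K f);
  cm_ax7 : forall f, Emap K (sqLamLam K f (cm_ax1 f)) ⊚ sig K f
                     = sig K (lamA K f) ⊚ sig K f }.

Record IsNWFS {C : Category} (K : PreComon C)
    (pi : forall f, Hom (E K (rhoA K f)) (E K f)) : Prop := {
  nw_com : IsComon K;
  pi_nat : forall f g (s : Sq f g),
      pi g ⊚ Emap K (sqRho K s (rho_nat K nw_com f g s)) = Emap K s ⊚ pi f;
  nw_ax2 : forall f, rho K f ⊚ pi f = rho K (rhoA K f);
  nw_ax4 : forall f, pi f ⊚ lam K (rhoA K f) = idc (E K f);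
  nw_ax6 : forall f, pi f ⊚ Emap K (sqFRho K f (factor K nw_com f)) = idc (E K f);
  nw_ax8 : forall f, pi f ⊚ Emap K (sqPi K pi f (nw_ax2 f)) = pi f ⊚ pi (rhoA K f);
  nw_ax9 : forall f, sig K f ⊚ pi f =
      pi (lamA K f) ⊚ Emap K (sqSigPi K pi f (cm_ax3 K nw_com f) (nw_ax4 f))
        ⊚ sig K (rhoA K f) }.

Record NWFS (C : Category) := {
  nK : PreComon C;
  npi : forall f, Hom (E nK (rhoA nK f)) (E nK f);
  nlaws : IsNWFS nK npi }.
Arguments nK {C} n.
Arguments npi {C} n f.

Record IsComonMor {C : Category} (K K' : PreComon C)
    (a : forall f, Hom (E K f) (E K' f)) : Prop := {
  mor_nat : forall f g (s : Sq f g), a g ⊚ Emap K s = Emap K' s ⊚ a f;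
  mor_lam : forall f, a f ⊚ lam K f = lam K' f;
  mor_rho : forall f, rho K' f ⊚ a f = rho K f;
  mor_sig : forall f, sig K' f ⊚ a f =
      a (lamA K' f) ⊚ Emap K (sqAlphaLam K K' a f (mor_lam f)) ⊚ sig K f }.

Record IsNwfsMor {C : Category} (V V' : NWFS C)
    (a : forall f, Hom (E (nK V) f) (E (nK V') f)) : Prop := {
  nmor_com : IsComonMor (nK V) (nK V') a;
  nmor_pi : forall f,
      npi V' f ⊚ a (rhoA (nK V') f)
        ⊚ Emap (nK V) (sqAlphaRho (nK V) (nK V') a f (mor_rho _ _ _ nmor_com f))
      = a f ⊚ npi V f }.

Record IsCoalg {C : Category} (K : PreComon C) (f : Arr C)
    (s : Hom (acod f) (E K f)) : Prop := {
  co_lam : s ⊚ amap f = lam K f;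
  co_rho : rho K f ⊚ s = idc (acod f);
  co_sig : sig K f ⊚ s = Emap K (sqCoalg K f s co_lam) ⊚ s }.

(** * The one-step comonad L^1 generated by J (J given as a family of arrows) *)
Section OneStep.
Context {C : Category} (CC : Cocomplete C) {JI : Type} (J : JI -> Arr C).

Definition S1 (g : Arr C) : Type := { x : JI & Sq (J x) g }.
Definition FA (g : Arr C) (x : S1 g) : Obj C := adom (J (projT1 x)).
Definition FB (g : Arr C) (x : S1 g) : Obj C := acod (J (projT1 x)).

Definition sumf (g : Arr C) : Hom (copr CC (FA g)) (copr CC (FB g)) :=
  copr_desc CC (FA g) (fun x => copr_in CC (FB g) x ⊚ amap (J (projT1 x))).
Definition hvec (g : Arr C) : Hom (copr CC (FA g)) (adom g) :=
  copr_desc CC (FA g) (fun x => sq_top (projT2 x)).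

Definition E1 (g : Arr C) : Obj C := po CC (sumf g) (hvec g).
Definition lam1 (g : Arr C) : Hom (adom g) (E1 g) := po_r CC (sumf g) (hvec g).
Definition rho1 (g : Arr C) : Hom (E1 g) (acod g) :=
  po_desc CC (sumf g) (hvec g) (copr_desc CC (FB g) (fun x => sq_bot (projT2 x))) (amap g).

Definition reindex {g g' : Arr C} (s : Sq g g') (x : S1 g) : S1 g' :=
  existT _ (projT1 x) (sq_comp (projT2 x) s).

Definition E1map (g g' : Arr C) (s : Sq g g') : Hom (E1 g) (E1 g') :=
  po_desc CC (sumf g) (hvec g)
    (po_l CC (sumf g') (hvec g') ⊚
       copr_desc CC (FB g) (fun x => copr_in CC (FB g') (reindex s x)))
    (lam1 g' ⊚ sq_top s).

Definition iota1 (g : Arr C) (x : S1 g) : Hom (FB g x) (E1 g) :=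
  po_l CC (sumf g) (hvec g) ⊚ copr_in CC (FB g) x.

Lemma iota1_comm (g : Arr C) (x : S1 g) :
  iota1 g x ⊚ amap (J (projT1 x)) = lam1 g ⊚ sq_top (projT2 x).
Proof.
  unfold iota1, lam1.
  rewrite <- comp_assoc.
  assert (H1 : copr_in CC (FB g) x ⊚ amap (J (projT1 x)) = sumf g ⊚ copr_in CC (FA g) x).
  { unfold sumf. now rewrite (copr_beta C CC _ (FA g)). }
  assert (H2 : sq_top (projT2 x) = hvec g ⊚ copr_in CC (FA g) x).
  { unfold hvec. now rewrite (copr_beta C CC _ (FA g)). }
  rewrite H1, H2, !comp_assoc. f_equal. apply (po_comm CC).
Qed.

Definition iotaSq (g : Arr C) (x : S1 g) : Sq (J (projT1 x)) (mkArr (lam1 g)) :=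
  @mkSq C (J (projT1 x)) (mkArr (lam1 g)) (sq_top (projT2 x)) (iota1 g x) (iota1_comm g x).

Definition sig1 (g : Arr C) : Hom (E1 g) (E1 (mkArr (lam1 g))) :=
  po_desc CC (sumf g) (hvec g)
    (po_l CC (sumf (mkArr (lam1 g))) (hvec (mkArr (lam1 g))) ⊚
       copr_desc CC (FB g)
         (fun x => copr_in CC (FB (mkArr (lam1 g)))
                     (existT _ (projT1 x) (iotaSq g x) : S1 (mkArr (lam1 g)))))
    (lam1 (mkArr (lam1 g)) ⊚ idc (adom g)).

Definition L1 : PreComon C :=
  {| E := E1; Emap := E1map; lam := lam1; rho := rho1; sig := sig1 |}.
End OneStep.

(** * The n.w.f.s. generated by J: (L, chi) with chi : L^1 -> L in Comon such
    that precomposition with chi is a bijection from n.w.f.s. morphisms L -> V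
    to Comon-morphisms L^1 -> V, for every n.w.f.s. V. *)
Definition precomp {C : Category} {K0 K K' : PreComon C}
  (chi : forall f, Hom (E K0 f) (E K f)) (b : forall f, Hom (E K f) (E K' f)) :
  forall f, Hom (E K0 f) (E K' f) := fun f => b f ⊚ chi f.

Definition IsGeneratedNWFS {C : Category} (CC : Cocomplete C) {JI : Type}
  (J : JI -> Arr C) (L : NWFS C) (chi : forall f, Hom (E (L1 CC J) f) (E (nK L) f)) : Prop :=
  IsComonMor (L1 CC J) (nK L) chi /\
  forall V : NWFS C,
    (forall b, IsNwfsMor L V b -> IsComonMor (L1 CC J) (nK V) (precomp chi b)) /\
    (forall b b', IsNwfsMor L V b -> IsNwfsMor L V b' ->
        precomp chi b = precomp chi b' -> b = b') /\
    (forall a, IsComonMor (L1 CC J) (nK V) a ->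
        exists b, IsNwfsMor L V b /\ precomp chi b = a).

(** Since [E^1 g] is a pushout of coproducts indexed by the squares
    [x = (j, (h, k)) : f_j -> g], a [Comon]-morphism [a] out of [L^1] is
    determined by its values on the generic squares [(j, (1, 1))]: naturality
    gives [a_g iota_x = E'(h, k) (a_{f_j} iota_(j,(1,1)))].  The comonad laws
    for [a] say exactly that each [a_{f_j} iota_(j,(1,1))] is an
    [L']-coalgebra structure on [f_j], and conversely a family of coalgebra
    structures [s_j] extends to the [Comon]-morphism sending the summand [x]
    to [E'(h, k) s_j].  Composing this bijection with the universal property
    of the generated n.w.f.s. yields the theorem; naturality in the target is
    associativity of composition. *)

From Stdlib Require Import FunctionalExtensionality ProofIrrelevance.
From Corelib Require Import ssreflect.

Lemma sq_eq {C : Category} {f g : Arr C} (s t : Sq f g) :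
  sq_top s = sq_top t -> sq_bot s = sq_bot t -> s = t.
Proof.
  case: s => a b e; case: t => a' b' e' /= Ha Hb; subst a' b'.
  by rewrite (proof_irrelevance _ e e').
Qed.

Lemma Emap_sq_eq {C : Category} (K : PreComon C) {f g : Arr C} (s t : Sq f g) :
  sq_top s = sq_top t -> sq_bot s = sq_bot t -> Emap K s = Emap K t.
Proof. by move=> Htop Hbot; rewrite (sq_eq s t Htop Hbot). Qed.

Lemma sq_comp_id_l {C : Category} {f g : Arr C} (s : Sq f g) : sq_comp (sq_id f) s = s.
Proof. by apply: sq_eq; rewrite /= comp_id_r. Qed.

Lemma copr_hom_ext {C : Category} (CC : Cocomplete C) {I : Type} (F : I -> Obj C)
  {X : Obj C} (u w : Hom (copr CC F) X) :
  (forall i, u ⊚ copr_in CC F i = w ⊚ copr_in CC F i) -> u = w.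
Proof.
  move=> Huw.
  rewrite (copr_eta C CC I F X _ u Huw).
  by symmetry; apply: (copr_eta C CC I F X).
Qed.

Section OneStepComonad.
Context {C : Category} (CC : Cocomplete C) {JI : Type} (J : JI -> Arr C).

Definition E1_cocone (g : Arr C) {X : Obj C}
  (u : Hom (copr CC (FB J g)) X) (v : Hom (adom g) X) : Prop :=
  forall x, u ⊚ copr_in CC (FB J g) x ⊚ amap (J (projT1 x)) = v ⊚ sq_top (projT2 x).

Lemma E1_cocone_po_comm (g : Arr C) {X : Obj C}
  (u : Hom (copr CC (FB J g)) X) (v : Hom (adom g) X) :
  E1_cocone g u v -> u ⊚ sumf CC J g = v ⊚ hvec CC J g.
Proof.
  move=> Huv; apply: copr_hom_ext => x.
  rewrite -!comp_assoc /sumf /hvec !(copr_beta C CC) comp_assoc.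
  exact: Huv.
Qed.

Lemma po_desc_iota1 (g : Arr C) {X : Obj C}
  (u : Hom (copr CC (FB J g)) X) (v : Hom (adom g) X) x :
  E1_cocone g u v ->
  po_desc CC (sumf CC J g) (hvec CC J g) u v ⊚ iota1 CC J g x = u ⊚ copr_in CC (FB J g) x.
Proof.
  move=> /E1_cocone_po_comm Huv.
  by rewrite /iota1 comp_assoc (proj1 (po_beta C CC _ _ _ _ _ X u v Huv)).
Qed.

Lemma po_desc_lam1 (g : Arr C) {X : Obj C}
  (u : Hom (copr CC (FB J g)) X) (v : Hom (adom g) X) :
  E1_cocone g u v -> po_desc CC (sumf CC J g) (hvec CC J g) u v ⊚ lam1 CC J g = v.
Proof.
  move=> /E1_cocone_po_comm Huv.
  exact: (proj2 (po_beta C CC _ _ _ _ _ X u v Huv)).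
Qed.

Lemma E1_hom_ext (g : Arr C) {X : Obj C} (u w : Hom (E1 CC J g) X) :
  (forall x, u ⊚ iota1 CC J g x = w ⊚ iota1 CC J g x) ->
  u ⊚ lam1 CC J g = w ⊚ lam1 CC J g -> u = w.
Proof.
  move=> Hiota Hlam.
  have Hcomm : (u ⊚ po_l CC (sumf CC J g) (hvec CC J g)) ⊚ sumf CC J g
             = (u ⊚ po_r CC (sumf CC J g) (hvec CC J g)) ⊚ hvec CC J g.
    by rewrite -!comp_assoc (po_comm CC).
  rewrite (po_eta C CC _ _ _ _ _ X _ _ u Hcomm eq_refl eq_refl).
  symmetry; apply: (po_eta C CC _ _ _ _ _ X _ _ w Hcomm); last by rewrite -Hlam.
  by apply: copr_hom_ext => x; rewrite -!comp_assoc -Hiota.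
Qed.

Lemma E1map_cocone {g g' : Arr C} (t : Sq g g') :
  E1_cocone g
    (po_l CC (sumf CC J g') (hvec CC J g')
       ⊚ copr_desc CC (FB J g) (fun x => copr_in CC (FB J g') (reindex J t x)))
    (lam1 CC J g' ⊚ sq_top t).
Proof.
  move=> x; rewrite -(comp_assoc _ (copr_desc _ _ _)) (copr_beta C CC).
  exact: eq_trans (iota1_comm CC J g' (reindex J t x)) (comp_assoc _ _ _).
Qed.

Lemma E1map_iota1 {g g' : Arr C} (t : Sq g g') x :
  E1map CC J g g' t ⊚ iota1 CC J g x = iota1 CC J g' (reindex J t x).
Proof.
  by rewrite /E1map (po_desc_iota1 _ _ _ _ (E1map_cocone t)) -comp_assoc (copr_beta C CC).
Qed.

Lemma E1map_lam1 {g g' : Arr C} (t : Sq g g') :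
  E1map CC J g g' t ⊚ lam1 CC J g = lam1 CC J g' ⊚ sq_top t.
Proof. exact: po_desc_lam1 (E1map_cocone t). Qed.

Lemma rho1_cocone (g : Arr C) :
  E1_cocone g (copr_desc CC (FB J g) (fun x => sq_bot (projT2 x))) (amap g).
Proof. by move=> x; rewrite (copr_beta C CC); apply: sq_comm. Qed.

Lemma rho1_iota1 (g : Arr C) x : rho1 CC J g ⊚ iota1 CC J g x = sq_bot (projT2 x).
Proof. by rewrite /rho1 (po_desc_iota1 _ _ _ _ (rho1_cocone g)) (copr_beta C CC). Qed.

Lemma rho1_lam1 (g : Arr C) : rho1 CC J g ⊚ lam1 CC J g = amap g.
Proof. exact: po_desc_lam1 (rho1_cocone g). Qed.

Definition iotaS1 {g : Arr C} (x : S1 J g) : S1 J (mkArr (lam1 CC J g)) :=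
  existT _ (projT1 x) (iotaSq CC J g x).

Lemma sig1_cocone (g : Arr C) :
  E1_cocone g
    (po_l CC (sumf CC J (mkArr (lam1 CC J g))) (hvec CC J (mkArr (lam1 CC J g)))
       ⊚ copr_desc CC (FB J g) (fun x => copr_in CC (FB J (mkArr (lam1 CC J g))) (iotaS1 x)))
    (lam1 CC J (mkArr (lam1 CC J g)) ⊚ idc (adom g)).
Proof.
  move=> x; rewrite -(comp_assoc _ (copr_desc _ _ _)) (copr_beta C CC) comp_id_r.
  exact (iota1_comm CC J _ (iotaS1 x)).
Qed.

Lemma sig1_iota1 (g : Arr C) x :
  sig1 CC J g ⊚ iota1 CC J g x = iota1 CC J (mkArr (lam1 CC J g)) (iotaS1 x).
Proof.
  by rewrite /sig1 (po_desc_iota1 _ _ _ _ (sig1_cocone g)) -comp_assoc (copr_beta C CC).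
Qed.

Lemma sig1_lam1 (g : Arr C) :
  sig1 CC J g ⊚ lam1 CC J g = lam1 CC J (mkArr (lam1 CC J g)) ⊚ idc (adom g).
Proof. exact: po_desc_lam1 (sig1_cocone g). Qed.

Definition genS1 (j : JI) : S1 J (J j) := existT _ j (sq_id (J j)).

(* Left without a type ascription, so that its domain stays [FB J (J j) (genS1 j)]
   and rewriting with the [iota1] lemmas matches syntactically.  Where a goal
   has the domain [acod (J j)] instead (from [IsCoalg]), those lemmas are
   instantiated explicitly. *)
Definition eta1 (j : JI) := iota1 CC J (J j) (genS1 j).

Definition coalg_of_mor {K : PreComon C} (a : forall f, Hom (E (L1 CC J) f) (E K f))
  (j : JI) :=
  a (J j) ⊚ eta1 j.

Section ComonMorphismsOutOfL1.
Context (K : PreComon C).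

Lemma comon_mor_iota1 {a : forall f, Hom (E (L1 CC J) f) (E K f)}
  (Ha : IsComonMor (L1 CC J) K a) (g : Arr C) (x : S1 J g) :
  a g ⊚ iota1 CC J g x = Emap K (projT2 x) ⊚ coalg_of_mor a (projT1 x).
Proof.
  case: x => j s /=.
  rewrite /coalg_of_mor [RHS]comp_assoc -(mor_nat _ _ _ Ha _ _ s) -[RHS]comp_assoc.
  by rewrite /= /eta1 (E1map_iota1 s (genS1 j)) /reindex sq_comp_id_l.
Qed.

Lemma coalg_of_comon_mor {a : forall f, Hom (E (L1 CC J) f) (E K f)}
  (Ha : IsComonMor (L1 CC J) K a) (j : JI) : IsCoalg K (J j) (coalg_of_mor a j).
Proof.
  have Hlam : coalg_of_mor a j ⊚ amap (J j) = lam K (J j).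
    rewrite /coalg_of_mor -comp_assoc /eta1 (iota1_comm CC J (J j) (genS1 j)) /=.
    rewrite comp_id_r.
    exact: mor_lam _ _ _ Ha (J j).
  apply: (Build_IsCoalg _ _ _ _ Hlam).
  - by rewrite /coalg_of_mor comp_assoc (mor_rho _ _ _ Ha) /= /eta1 (rho1_iota1 _ (genS1 j)).
  - rewrite {1}/coalg_of_mor comp_assoc (mor_sig _ _ _ Ha) /= -!comp_assoc /eta1.
    rewrite (sig1_iota1 _ (genS1 j)) (E1map_iota1 _ (iotaS1 (genS1 j))).
    rewrite (comon_mor_iota1 Ha _ (reindex J _ (iotaS1 (genS1 j)))).
    by congr (_ ⊚ _); apply: Emap_sq_eq; rewrite /= ?comp_id_l.
Qed.

Lemma comon_mor_ext {a a' : forall f, Hom (E (L1 CC J) f) (E K f)}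
  (Ha : IsComonMor (L1 CC J) K a) (Ha' : IsComonMor (L1 CC J) K a') :
  coalg_of_mor a = coalg_of_mor a' -> a = a'.
Proof.
  move=> Haa'; apply: functional_extensionality_dep => g.
  apply: E1_hom_ext => [x|].
  - by rewrite (comon_mor_iota1 Ha) (comon_mor_iota1 Ha') Haa'.
  - by rewrite (mor_lam _ _ _ Ha g) (mor_lam _ _ _ Ha' g).
Qed.

Section ComonMorphismOfCoalgebras.
Context (HK : IsComon K) (s : forall j, Hom (acod (J j)) (E K (J j)))
  (Hs : forall j, IsCoalg K (J j) (s j)).

Definition mor_of_coalg (g : Arr C) : Hom (E1 CC J g) (E K g) :=
  po_desc CC (sumf CC J g) (hvec CC J g)
    (copr_desc CC (FB J g) (fun x => Emap K (projT2 x) ⊚ s (projT1 x))) (lam K g).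

Lemma mor_of_coalg_cocone (g : Arr C) :
  E1_cocone g (copr_desc CC (FB J g) (fun x => Emap K (projT2 x) ⊚ s (projT1 x))) (lam K g).
Proof.
  move=> x; rewrite (copr_beta C CC) -comp_assoc (co_lam _ _ _ (Hs _)).
  exact: (lam_nat K HK).
Qed.

Lemma mor_of_coalg_iota1 (g : Arr C) x :
  mor_of_coalg g ⊚ iota1 CC J g x = Emap K (projT2 x) ⊚ s (projT1 x).
Proof.
  by rewrite /mor_of_coalg (po_desc_iota1 _ _ _ _ (mor_of_coalg_cocone g)) (copr_beta C CC).
Qed.

Lemma mor_of_coalg_lam1 (g : Arr C) : mor_of_coalg g ⊚ lam1 CC J g = lam K g.
Proof. exact: po_desc_lam1 (mor_of_coalg_cocone g). Qed.

Lemma coalg_of_mor_of_coalg : coalg_of_mor mor_of_coalg = s.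
Proof.
  apply: functional_extensionality_dep => j.
  by rewrite /coalg_of_mor /eta1 mor_of_coalg_iota1 /= (Emap_id K HK) comp_id_l.
Qed.

Lemma mor_of_coalg_nat (f g : Arr C) (t : Sq f g) :
  mor_of_coalg g ⊚ Emap (L1 CC J) t = Emap K t ⊚ mor_of_coalg f.
Proof.
  apply: E1_hom_ext => [x|].
  - rewrite -!comp_assoc /= E1map_iota1 (mor_of_coalg_iota1 g (reindex J t x)).
    by rewrite mor_of_coalg_iota1 [RHS]comp_assoc -(Emap_comp K HK).
  - rewrite -!comp_assoc /= E1map_lam1 mor_of_coalg_lam1 comp_assoc mor_of_coalg_lam1.
    by rewrite (lam_nat K HK).
Qed.

Lemma mor_of_coalg_rho (f : Arr C) : rho K f ⊚ mor_of_coalg f = rho (L1 CC J) f.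
Proof.
  apply: E1_hom_ext => [x|] /=.
  - rewrite -comp_assoc mor_of_coalg_iota1 rho1_iota1 comp_assoc (rho_nat K HK).
    by rewrite -comp_assoc (co_rho _ _ _ (Hs _)) comp_id_r.
  - by rewrite -comp_assoc mor_of_coalg_lam1 rho1_lam1 (factor K HK).
Qed.

Lemma mor_of_coalg_sig (f : Arr C) :
  sig K f ⊚ mor_of_coalg f =
  mor_of_coalg (lamA K f)
    ⊚ Emap (L1 CC J) (sqAlphaLam (L1 CC J) K mor_of_coalg f (mor_of_coalg_lam1 f))
    ⊚ sig (L1 CC J) f.
Proof.
  apply: E1_hom_ext => [x|] /=.
  - rewrite -!comp_assoc sig1_iota1 (E1map_iota1 _ (iotaS1 x)) mor_of_coalg_iota1.
    rewrite (mor_of_coalg_iota1 _ (reindex J _ (iotaS1 x))).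
    rewrite comp_assoc -(sig_nat K HK) -comp_assoc (co_sig _ _ _ (Hs _)).
    rewrite comp_assoc -(Emap_comp K HK); congr (_ ⊚ _).
    apply: Emap_sq_eq => /=; first by rewrite comp_id_l comp_id_r.
    by rewrite mor_of_coalg_iota1.
  - rewrite -!comp_assoc mor_of_coalg_lam1 (cm_ax1 K HK) sig1_lam1 comp_id_r.
    rewrite (E1map_lam1 (sqAlphaLam (L1 CC J) K mor_of_coalg f (mor_of_coalg_lam1 f))) /=.
    by rewrite comp_id_r (mor_of_coalg_lam1 (lamA K f)).
Qed.

Lemma comon_mor_of_coalg : IsComonMor (L1 CC J) K mor_of_coalg.
Proof.
  exact (Build_IsComonMor _ _ _ _ mor_of_coalg_nat mor_of_coalg_lam1 mor_of_coalg_rho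
    mor_of_coalg_sig).
Qed.

End ComonMorphismOfCoalgebras.

End ComonMorphismsOutOfL1.

End OneStepComonad.

Theorem proposition5p10 (C : Category) (CC : Cocomplete C) (JI : Type)
  (J : JI -> Arr C) (L : NWFS C)
  (chi : forall f, Hom (E (L1 CC J) f) (E (nK L) f)) :
  IsGeneratedNWFS CC J L chi ->
  exists Phi : forall V : NWFS C,
      (forall f, Hom (E (nK L) f) (E (nK V) f)) ->
      forall j : JI, Hom (acod (J j)) (E (nK V) (J j)),
    (* Phi_V sends n.w.f.s. morphisms L -> V to families of V-coalgebra
       structures on the elements of J ... *)
    (forall (V : NWFS C) b, IsNwfsMor L V b ->
        forall j, IsCoalg (nK V) (J j) (Phi V b j)) /\
    (* ... injectively ... *)
    (forall (V : NWFS C) b b', IsNwfsMor L V b -> IsNwfsMor L V b' ->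
        Phi V b = Phi V b' -> b = b') /\
    (* ... and surjectively; *)
    (forall (V : NWFS C) (s : forall j : JI, Hom (acod (J j)) (E (nK V) (J j))),
        (forall j, IsCoalg (nK V) (J j) (s j)) ->
        exists b, IsNwfsMor L V b /\ Phi V b = s) /\
    (* naturality in V *)
    (forall (V V' : NWFS C) b g, IsNwfsMor L V b -> IsNwfsMor V V' g ->
        Phi V' (fun f => g f ⊚ b f) = (fun j => g (J j) ⊚ Phi V b j)).
Proof.
  move=> [_ Hgen].
  exists (fun V b => coalg_of_mor CC J (precomp chi b)).
  split; [|split; [|split]].
  - move=> V b Hb; apply: coalg_of_comon_mor.
    exact: (proj1 (Hgen V) b Hb).
  - move=> V b b' Hb Hb' Hbb'; have [Hmor [Hinj _]] := Hgen V.
    exact: Hinj _ _ Hb Hb' (comon_mor_ext CC J _ (Hmor b Hb) (Hmor b' Hb') Hbb').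
  - move=> V s Hs; have [_ [_ Hsurj]] := Hgen V.
    have HV : IsComon (nK V) := nw_com _ _ (nlaws C V).
    have [b [Hb Hbs]] := Hsurj _ (comon_mor_of_coalg CC J _ HV _ Hs).
    by exists b; split => //; rewrite /= Hbs (coalg_of_mor_of_coalg CC J _ HV _ Hs).
  - move=> V V' b g _ _; apply: functional_extensionality_dep => j.
    by rewrite /coalg_of_mor /precomp !comp_assoc.
Qed.
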